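(* Let $\mathcal M_\bullet=(B,\sigma,\alpha,b_\bullet)$ be a rooted map, let $S$ be (the edge set of) a spanning tree of $G(\mathcal M)$, and let $w$ be the associated double occurrence word. Then $S$ has the Trémaux property if and only if no edge $f$ has both an in-neighbor in $S$ and an out-neighbor in $S$ in $\vec{\Lambda}(w)$; equivalently, if and only if $w$ does not contain (as a subsequence) a pattern $e_1\,f\,e_1\,e_2\,f\,e_2$ with $e_1,e_2\in S$.
   Context: A map is a triple $\mathcal M=(B,\sigma,\alpha)$ with $B$ finite, $\sigma,\alpha\in\mathrm{Sym}(B)$, $\alpha$ a fixed-point-free involution, $\langle\sigma,\alpha\rangle$ transitive on $B$; a rooted map additionally has a root flag $b_\bullet\in B$. Edges are the cycles of $\alpha$; $\underline b=\{b,\alpha(b)\}$. The underlying graph $G(\mathcal M)$ has vertex set the cycles of $\sigma$, edge set the cycles of $\alpha$, $e$ incident to $v$ iff $e\cap v\neq\emptyset$. The tour of a set $F$ of edges is $\tau$ with $\tau(b)=\sigma(\alpha(b))$ if $\underline b\in F$ and $\tau(b)=\sigma(b)$ otherwise; for a spanning tree $S$, its tour $\tau$ is a single cycle on $B$, and the associated double occurrence word is $w=\underline{b_\bullet}\,\underline{\tau(b_\bullet)}\,\underline{\tau^2(b_\bullet)}\cdots\underline{\tau^{|B|-1}(b_\bullet)}$, a word on the alphabet of edges using each edge exactly twice. $\vec\Lambda(w)$ is the directed graph on the letters of $w$ with an arc $e\to f$ whenever $e\,f\,e\,f$ is a subsequence of $w$. $S$ has the Trémaux property if, rooting the tree $S$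 at the vertex (cycle of $\sigma$) containing $b_\bullet$, for every edge of $G(\mathcal M)$ its two end vertices lie on a common path from the root towards a leaf of $S$ (i.e. one is an ancestor of the other). *)

From mathcomp Require Import all_boot all_fingroup.
Set Implicit Arguments. Unset Strict Implicit. Unset Printing Implicit Defensive.

Section MapDefs.
Variable B : finType.
Implicit Types (s a : {perm B}) (S : {set {set B}}).

Definition is_map s a : Prop :=
  [/\ forall b, a b != b,
      forall b, a (a b) = b
    & forall x y, connect (fun u v => (v == s u) || (v == a u)) x y].

Definition vtx s (b : B) : {set B} := porbit s b.
Definition edge a (b : B) : {set B} := [set b; a b].
Definition edges a : {set {set B}} := [set edge a b | b : B].

Definition sadj s a S : rel {set B} :=
  fun u v => [exists b, [&& edge a b \in S, vtx s b == u & vtx s (a b) == v]].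

(* S is (the edge set of) a spanning tree of G(M): a set of edges of G(M)
   whose spanning subgraph is connected and acyclic (no edge of S lies on a
   cycle of S, i.e. the ends of each edge e of S are disconnected in S - e;
   loops are thereby excluded). *)
Definition spanning_tree s a S : Prop :=
  [/\ S \subset edges a,
      forall b1 b2, connect (sadj s a S) (vtx s b1) (vtx s b2)
    & forall b, edge a b \in S ->
        ~~ connect (sadj s a (S :\ edge a b)) (vtx s b) (vtx s (a b))].

Definition tour s a S (b : B) : B := if edge a b \in S then s (a b) else s b.

Definition dow s a S (b0 : B) : seq {set B} :=
  [seq edge a (iter i (tour s a S) b0) | i <- iota 0 #|B|].

Definition Larc (w : seq {set B}) (e f : {set B}) : bool :=
  subseq [:: e; f; e; f] w.

Definition tremaux s a S (b0 : B) : Prop :=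
  forall b, exists p : seq {set B},
    [/\ path (sadj s a S) (vtx s b0) p,
        uniq (vtx s b0 :: p),
        vtx s b \in vtx s b0 :: p
      & vtx s (a b) \in vtx s b0 :: p].

End MapDefs.

From mathcomp Require Import all_boot all_fingroup.
From mathcomp Require Import zify.
Set Implicit Arguments. Unset Strict Implicit. Unset Printing Implicit Defensive.

(* Say that a vertex lies below a tree edge [e] when removing [e] from S cuts
   it off from the root.  The tour passes between the two sides of [e] only
   along [e], once in each direction; as the tree is connected, the tour is a
   single cycle, and the two occurrences of [e] in [w] delimit exactly the
   stretch of the tour spent below [e].  Hence two tree edges are never
   interlaced, and an edge [f] is interlaced with a tree edge [e] exactly when
   one end of [f] lies below [e] and the other does not.  Along a simple path
   from the root, a vertex below [e] is followed only by vertices below [e]; so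
   a Tremaux path through both ends of [f] excludes arcs [e -> f -> g], which
   put each end of [f] below a tree edge that the other end is not below.
   Conversely, if neither end of [f] lies on the root path of the other, the
   last edges of these two root paths yield such arcs.  Both arcs use the two
   occurrences of [f], and since [e] and [g] are not interlaced the letters
   come in the order [e f e g f g]. *)

Lemma iter_change (T : Type) (f : T -> T) (P : pred T) u n :
  ~~ P u -> P (iter n f u) ->
  exists2 k, k < n & ~~ P (iter k f u) && P (iter k.+1 f u).
Proof.
move=> Pu; elim: n => [|n IHn] /=; first by rewrite (negbTE Pu).
move=> Pn; case: (boolP (P (iter n f u))) => [Pn1 | nPn1].
  by have [k lt_kn Pk] := IHn Pn1; exists k => //; apply: ltnW.
by exists n => //; rewrite nPn1 Pn.
Qed.

Lemma ltnS_addb m j : (m < j.+1) = (m < j) (+) (j == m).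
Proof. by rewrite ltnS; case: ltngtP. Qed.

Lemma subseq_iota t n : subseq t (iota 0 n) = sorted ltn t && all (gtn n) t.
Proof.
apply/idP/andP => [sub_t | [sorted_t lt_t]].
  split; first exact: (subseq_sorted ltn_trans sub_t (iota_ltn_sorted 0 n)).
  by apply/allP => i /(mem_subseq sub_t); rewrite mem_iota.
have -> : t = filter (mem t) (iota 0 n).
  apply: (irr_sorted_eq ltn_trans ltnn) => //.
    exact/sorted_filter/iota_ltn_sorted/ltn_trans.
  move=> i; rewrite mem_filter mem_iota /=.
  by case t_i: (i \in t) => //=; have := allP lt_t i t_i.
exact: filter_subseq.
Qed.

Lemma subseq_map_iotaP (T : eqType) (f : nat -> T) p n :
  reflect (exists2 t, sorted ltn t && all (gtn n) t & p = map f t)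
          (subseq p (map f (iota 0 n))).
Proof.
apply: (iffP idP) => [/subseqP [m _ ->] | [t t_ok ->]].
  by exists (mask m (iota 0 n)); rewrite ?map_mask // -subseq_iota mask_subseq.
by apply: map_subseq; rewrite subseq_iota.
Qed.

Lemma pattern6_Larc (B : finType) (w : seq {set B}) e1 e2 f :
  subseq [:: e1; f; e1; e2; f; e2] w -> Larc w e1 f /\ Larc w f e2.
Proof.
move=> sub6; split; apply: subseq_trans sub6; apply/subseqP.
  by exists [:: true; true; true; false; true; false].
by exists [:: false; true; false; true; true; true].
Qed.

Section TreeTour.

Variables (B : finType) (s a : {perm B}) (b0 : B) (S : {set {set B}}).
Hypothesis aK : involutive a.
Hypothesis S_edges : S \subset edges a.
Hypothesis S_connected :
  forall b1 b2, connect (sadj s a S) (vtx s b1) (vtx s b2).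
Hypothesis S_acyclic : forall b, edge a b \in S ->
  ~~ connect (sadj s a (S :\ edge a b)) (vtx s b) (vtx s (a b)).

Local Notation tau := (tour s a S).
Local Notation v0 := (vtx s b0).
Local Notation n := #|B|.
Local Notation w := (dow s a S b0).

Definition below (e v : {set B}) := ~~ connect (sadj s a (S :\ e)) v0 v.

Lemma edge_flip y : edge a (a y) = edge a y.
Proof. by apply/setP => z; rewrite !inE aK orbC. Qed.

Lemma edge_darts z y : edge a z = edge a y -> z = y \/ z = a y.
Proof.
move=> eq_zy; have : z \in edge a z by rewrite !inE eqxx.
by rewrite eq_zy !inE => /orP [] /eqP; [left | right].
Qed.

Lemma sadj_sym F : symmetric (sadj s a F).
Proof.
move=> u v; apply/idP/idP => /existsP [b /and3P [Fb bu bv]];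
  by apply/existsP; exists (a b); rewrite edge_flip Fb aK bu bv.
Qed.

Lemma vtx_perm z : vtx s (s z) = vtx s z.
Proof. by have := porbit_perm s 1 z; rewrite expg1. Qed.

Lemma tour_inj : injective tau.
Proof.
move=> y z; rewrite /tour.
case Sy: (edge a y \in S); case Sz: (edge a z \in S) => /perm_inj eq_yz.
- by rewrite -(aK y) eq_yz aK.
- by rewrite -eq_yz edge_flip Sy in Sz.
- by rewrite eq_yz edge_flip Sz in Sy.
- exact: eq_yz.
Qed.

Lemma below_root e : ~~ below e v0.
Proof. by rewrite /below negbK connect0. Qed.

Lemma below_adj e u v : sadj s a (S :\ e) u v -> below e u = below e v.
Proof.
move=> uv; congr negb; apply/idP/idP => c0; apply: (connect_trans c0).
  exact: connect1.
by apply: connect1; rewrite sadj_sym.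
Qed.

Lemma below_tour e z :
  edge a z != e -> below e (vtx s (tau z)) = below e (vtx s z).
Proof.
rewrite /tour => ne_ze; case: ifP => Sz; rewrite vtx_perm //.
rewrite (@below_adj e (vtx s z) (vtx s (a z))) //.
by apply/existsP; exists z; rewrite !inE ne_ze Sz !eqxx.
Qed.

Lemma below_tree_dart y : edge a y \in S ->
  below (edge a y) (vtx s y) || below (edge a y) (vtx s (a y)).
Proof.
move=> Sy; rewrite /below -negb_and; apply: contra (S_acyclic Sy).
case/andP => c_y c_ay; apply: connect_trans c_ay.
by rewrite (sym_connect_sym (@sadj_sym _)).
Qed.

Lemma tour_meets_edge e u v : fconnect tau u v ->
  below e (vtx s v) != below e (vtx s u) ->
  exists2 z, fconnect tau u z &
    edge a z = e /\ below e (vtx s z) = below e (vtx s u).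
Proof.
move=> /iter_findex <- changed.
have [i _ /andP [/negPn/eqP same next]] :=
  @iter_change _ tau (fun z => below e (vtx s z) != below e (vtx s u))
    u (findex tau u v) ltac:(by rewrite /= eqxx) changed.
exists (iter i tau u); first exact: fconnect_iter.
split=> //; apply/eqP; apply: contraR next => /below_tour /= ->.
by rewrite same eqxx.
Qed.

Lemma tour_flip y :
  fconnect tau b0 y -> edge a y \in S -> fconnect tau b0 (a y).
Proof.
move=> b0y Sy; set e := edge a y.
have other z :
    edge a z = e -> below e (vtx s z) != below e (vtx s y) -> z = a y.
  by case/edge_darts => // ->; rewrite eqxx.
have [y_below | y_above] := boolP (below e (vtx s y)).
  have changed : below e (vtx s y) != below e v0.
    by rewrite y_below (negbTE (below_root e)).
  have [z b0z [ez bz]] := tour_meets_edge b0y changed.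
  by rewrite -(other z ez) // bz y_below (negbTE (below_root e)).
have ay_below : below e (vtx s (a y)).
  by have := below_tree_dart Sy; rewrite (negbTE y_above).
have b0ty : fconnect tau b0 (tau y) := connect_trans b0y (fconnect1 _ y).
have tyb0 : fconnect tau (tau y) b0 by rewrite fconnect_sym //; apply: tour_inj.
have vty : vtx s (tau y) = vtx s (a y) by rewrite /tour Sy vtx_perm.
have changed : below e v0 != below e (vtx s (tau y)).
  by rewrite vty ay_below (negbTE (below_root e)).
have [z tyz [ez bz]] := tour_meets_edge tyb0 changed.
rewrite -(other z ez); first exact: connect_trans tyz.
by rewrite bz vty ay_below (negbTE y_above).
Qed.

Lemma tour_vertex y z :
  fconnect tau b0 y -> vtx s z = vtx s y -> fconnect tau b0 z.
Proof.
move=> b0y zy; have : z \in vtx s y by rewrite -zy porbit_id.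
case/porbitP => i ->; rewrite permX; elim: i => [//|i IHi] /=.
case Si: (edge a (iter i s y) \in S).
  have -> : s (iter i s y) = tau (a (iter i s y)).
    by rewrite /tour edge_flip Si aK.
  exact: connect_trans (tour_flip IHi Si) (fconnect1 _ _).
have -> : s (iter i s y) = tau (iter i s y) by rewrite /tour Si.
exact: connect_trans IHi (fconnect1 _ _).
Qed.

Lemma tour_connected y : fconnect tau b0 y.
Proof.
suff reach u p : (forall z, vtx s z = u -> fconnect tau b0 z) ->
    path (sadj s a S) u p -> forall z, vtx s z = last u p -> fconnect tau b0 z.
  have [p p_path p_last] := connectP (S_connected b0 y).
  apply: (reach _ p _ p_path _ p_last) => z.
  exact: tour_vertex (connect0 _ b0).
elim: p u => [|v p IHp] u reach_u //=.
case/andP => /existsP [d /and3P [Sd /eqP du /eqP dv]] p_path.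
apply: (IHp v _ p_path) => z zv.
by apply: tour_vertex (tour_flip (reach_u d du) Sd) _; rewrite zv dv.
Qed.

Definition visit i := iter i tau b0.
Definition vpos y := findex tau b0 y.
Definition letter i := edge a (visit i).

Lemma dowE : w = map letter (iota 0 n).
Proof. by []. Qed.

Lemma order_tour : fingraph.order tau b0 = n.
Proof. by apply: eq_card => z; rewrite !inE tour_connected. Qed.

Lemma vpos_lt y : vpos y < n.
Proof. by rewrite -order_tour; apply/findex_max/tour_connected. Qed.

Lemma visitK y : visit (vpos y) = y.
Proof. exact/iter_findex/tour_connected. Qed.

Lemma vposK i : i < n -> vpos (visit i) = i.
Proof. by move=> lt_in; rewrite /vpos /visit findex_iter // order_tour. Qed.

Lemma visit_inj i j : i < n -> j < n -> visit i = visit j -> i = j.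
Proof.
by move=> lt_in lt_jn eq_ij; rewrite -(vposK lt_in) -(vposK lt_jn) eq_ij.
Qed.

Lemma visit_eq_vpos i y : i < n -> (visit i == y) = (i == vpos y).
Proof.
by move=> lt_in; apply/eqP/eqP => [<- | ->]; [rewrite vposK | exact: visitK].
Qed.

Lemma letter_vpos y : letter (vpos y) = edge a y.
Proof. by rewrite /letter visitK. Qed.

Lemma letter_eq i j : i < n -> j < n -> i != j ->
  letter j = letter i -> visit j = a (visit i).
Proof.
move=> lt_in lt_jn ne_ij /edge_darts [/(visit_inj lt_jn lt_in) eq_ji | //].
by rewrite eq_ji eqxx in ne_ij.
Qed.

Lemma letter_twice i1 i2 j1 j2 : i1 < i2 < n -> j1 < j2 < n ->
  letter i2 = letter i1 -> letter j1 = letter i1 -> letter j2 = letter i1 ->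
  j1 = i1 /\ j2 = i2.
Proof.
move=> /andP [lt_i12 lt_i2n] /andP [lt_j12 lt_j2n] l2 lj1 lj2.
have lt_i1n : i1 < n by apply: ltn_trans lt_i2n.
have v2 : visit i2 = a (visit i1) by apply: letter_eq; rewrite ?neq_ltn ?lt_i12.
have at_i j : j < n -> letter j = letter i1 -> j = i1 \/ j = i2.
  move=> lt_jn lj; have [-> | ne] := eqVneq j i1; [by left | right].
  by apply: visit_inj => //; rewrite v2 (letter_eq lt_i1n lt_jn _ lj) // eq_sym.
have := at_i j1 (ltn_trans lt_j12 lt_j2n) lj1; have := at_i j2 lt_j2n lj2.
lia.
Qed.

Lemma tree_edge_sides e : e \in S ->
  exists x, [/\ edge a x = e, ~~ below e (vtx s x) & below e (vtx s (a x))].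
Proof.
move=> Se; have /imsetP [y _ ey] := subsetP S_edges e Se.
have Sy : edge a y \in S by rewrite -ey.
have one_side : ~~ (below e (vtx s y) && below e (vtx s (a y))).
  apply/andP => -[y_below ay_below].
  have changed : below e (vtx s y) != below e v0.
    by rewrite y_below (negbTE (below_root e)).
  have [z _ [ez]] := tour_meets_edge (tour_connected y) changed.
  rewrite (negbTE (below_root e)).
  by case: (edge_darts (etrans ez ey)) => ->; rewrite ?y_below ?ay_below.
have := below_tree_dart Sy; rewrite -ey.
have [y_below _ | y_above /= ay_below] := boolP (below e (vtx s y)).
  exists (a y); rewrite edge_flip aK -ey y_below; split => //.
  by move: one_side; rewrite y_below.
by exists y.
Qed.

Lemma below_visit_xor e x : e \in S -> edge a x = e ->
  ~~ below e (vtx s x) -> below e (vtx s (a x)) ->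
  forall j, j <= n ->
    below e (vtx s (visit j)) = (vpos x < j) (+) (vpos (a x) < j).
Proof.
move=> Se ex x_above ax_below.
have ne_xax : (x == a x) = false.
  by apply: contraNF x_above => /eqP {1}->.
have toggle z :
    below e (vtx s (tau z)) = below e (vtx s z) (+) (z == x) (+) (z == a x).
  have [-> | ne_zx] := eqVneq z x.
    by rewrite /tour ex Se vtx_perm ax_below (negbTE x_above) ne_xax.
  have [-> | ne_zax] := eqVneq z (a x).
    by rewrite /tour edge_flip ex Se aK vtx_perm ax_below (negbTE x_above).
  rewrite below_tour ?addbF //; apply/eqP => ez.
  case: (edge_darts (etrans ez (esym ex))) => /eqP.
    by rewrite (negbTE ne_zx).
  by rewrite (negbTE ne_zax).
elim=> [|j IHj] lt_jn; first by rewrite /visit /= (negbTE (below_root e)).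
rewrite [visit _]/= toggle -/(visit j) IHj ?(ltnW lt_jn) // !visit_eq_vpos //.
by rewrite !ltnS_addb -addbA addbACA.
Qed.

Lemma tree_edge_interval e : e \in S -> exists i1 i2,
  [/\ i1 < i2 < n, letter i1 = e, letter i2 = e &
      forall j, j < n -> below e (vtx s (visit j)) = (i1 < j <= i2)].
Proof.
move=> Se; have [x [ex x_above ax_below]] := tree_edge_sides Se.
have below_xor := below_visit_xor Se ex x_above ax_below.
have ne_x : vpos x != vpos (a x).
  by apply: contraNneq x_above => eq_pos; rewrite -[x]visitK eq_pos visitK.
have lt_x : vpos x < vpos (a x).
  have := below_xor (vpos x) (ltnW (vpos_lt x)).
  rewrite visitK (negbTE x_above) ltnn /= => lt_ax.
  by rewrite ltn_neqAle ne_x leqNgt -lt_ax.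
exists (vpos x), (vpos (a x)); split.
- by rewrite lt_x vpos_lt.
- by rewrite letter_vpos.
- by rewrite letter_vpos edge_flip.
move=> j lt_jn; rewrite below_xor; last exact: ltnW.
case: (ltnP (vpos x) j) => [_ | le_jx] /=; first by case: leqP.
by rewrite ltnNge (leq_trans le_jx (ltnW lt_x)).
Qed.

Lemma below_visit e i1 i2 j : e \in S -> i1 < i2 < n ->
  letter i1 = e -> letter i2 = e -> j < n ->
  below e (vtx s (visit j)) = (i1 < j <= i2).
Proof.
move=> Se lt_i l1 l2 lt_jn.
have [k1 [k2 [lt_k lk1 lk2 below_k]]] := tree_edge_interval Se.
have [-> ->] : i1 = k1 /\ i2 = k2.
  by apply: (letter_twice lt_k lt_i); rewrite lk1 ?lk2 ?l1 ?l2.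
exact: below_k.
Qed.

Lemma tree_edges_nested e g i1 i2 l1 l2 : e \in S -> g \in S ->
  letter i1 = e -> letter i2 = e -> letter l1 = g -> letter l2 = g ->
  i1 < l1 <= i2 -> i2 < l2 < n -> False.
Proof.
move=> Se Sg e1 e2 g1 g2 /andP [lt_il1 le_li2] /andP [lt_il2 lt_l2n].
have lt_i : i1 < i2 < n by apply/andP; split; lia.
have [eq_ge | ne_ge] := eqVneq g e.
  suff [] : l1 = i1 /\ l2 = i2 by lia.
  by apply: (letter_twice lt_i); rewrite -?eq_ge ?e1 ?e2 ?g1 ?g2 //; lia.
have flip : visit l2 = a (visit l1).
  by apply: letter_eq; rewrite ?g1 ?g2 //; lia.
have adj : sadj s a (S :\ e) (vtx s (visit l1)) (vtx s (visit l2)).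
  apply/existsP; exists (visit l1).
  by rewrite flip !inE [edge _ _]g1 ne_ge Sg !eqxx.
have := below_adj adj; rewrite !(below_visit Se lt_i e1 e2); lia.
Qed.

Lemma LarcP e f : reflect
  (exists i1 j1 i2 j2, [/\ i1 < j1 < i2, i2 < j2 < n &
     [/\ letter i1 = e, letter j1 = f, letter i2 = e & letter j2 = f]])
  (Larc w e f).
Proof.
(* Generalizing [#|B|] keeps [/=] from unfolding the cardinal. *)
rewrite /Larc dowE; move: #|B| => m; apply: (iffP (subseq_map_iotaP _ _ _)).
  case=> [[|i1 [|j1 [|i2 [|j2 []]]]] //= ord [e1 f1 e2 f2]].
  by exists i1, j1, i2, j2; split; [lia | lia | split; symmetry].
case=> [i1 [j1 [i2 [j2 [ord1 ord2 [e1 f1 e2 f2]]]]]].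
exists [:: i1; j1; i2; j2]; first by rewrite /=; lia.
by rewrite /= e1 f1 e2 f2.
Qed.

Lemma Larc_chain e f g : Larc w e f -> Larc w f g -> exists i1 j1 i2 l1 j2 l2,
  [/\ i1 < j1 < i2, i2 < j2 < l2, j1 < l1 < j2, l2 < n &
   [/\ letter i1 = e, letter i2 = e, letter j1 = f, letter j2 = f &
        letter l1 = g /\ letter l2 = g]].
Proof.
move=> /LarcP [i1 [j1 [i2 [j2 [/andP [? ?] /andP [? ?] [e1 f1 e2 f2]]]]]].
move=> /LarcP [k1 [l1 [k2 [l2 [/andP [? ?] /andP [? ?] [f3 g1 f4 g2]]]]]].
have [? ?] : k1 = j1 /\ k2 = j2.
  by apply: letter_twice; rewrite ?f1 ?f2 ?f3 ?f4 //; apply/andP; split; lia.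
subst k1 k2; exists i1, j1, i2, l1, j2, l2.
by split; rewrite ?f1 ?f2 //; apply/andP; split; lia.
Qed.

Lemma interlaced_pattern6 e f g : e \in S -> g \in S ->
  Larc w e f -> Larc w f g -> subseq [:: e; f; e; g; f; g] w.
Proof.
move=> Se Sg ef fg; have [i1 [j1 [i2 [l1 [j2 [l2
  [/andP [? ?] /andP [? ?] /andP [? ?] lt_l2n [e1 e2 f1 f2 [g1 g2]]]]]]]]] :=
  Larc_chain ef fg.
have [lt_il | le_li] := ltnP i2 l1.
  rewrite dowE; move: #|B| lt_l2n => m lt_l2n; apply/subseq_map_iotaP.
  exists [:: i1; j1; i2; l1; j2; l2]; first by rewrite /=; lia.
  by rewrite /= e1 f1 e2 g1 f2 g2.
by case: (tree_edges_nested Se Sg e1 e2 g1 g2); apply/andP; split; lia.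
Qed.

Lemma below_path_monotone e u q : e \in S ->
  path (sadj s a S) u q -> uniq (u :: q) -> ~~ below e u ->
  {in u :: q &, forall v v', index v (u :: q) <= index v' (u :: q) ->
     below e v -> below e v'}.
Proof.
move=> Se q_path q_uniq u_above.
have [x [ex x_above ax_below]] := tree_edge_sides Se.
have entry v v' : sadj s a S v v' -> ~~ below e v -> below e v' -> v = vtx s x.
  case/existsP => d /and3P [Sd /eqP dv /eqP dv'] v_above v'_below.
  have [ed | ne_de] := eqVneq (edge a d) e.
    case: (edge_darts (etrans ed (esym ex))) => [<- // | dax].
    by rewrite -dv dax ax_below in v_above.
  have adj : sadj s a (S :\ e) v v'.
    by apply/existsP; exists d; rewrite !inE ne_de Sd dv dv' !eqxx.
  by move: v_above; rewrite (below_adj adj) v'_below.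
pose mono := [rel v v' | below e v ==> below e v'].
have sorted_q : sorted mono (u :: q).
  have : below e u -> vtx s x \notin u :: q by rewrite (negbTE u_above).
  elim: q u {u_above} q_path q_uniq => [|v q IHq] u //=.
  move=> /andP [uv vq] /andP [u_vq vq_uniq] inv.
  have v_inv : below e v -> vtx s x \notin v :: q.
    move=> v_below; have [u_below | u_above] := boolP (below e u).
      by move: (inv u_below); rewrite inE negb_or => /andP [].
    by rewrite -(entry u v).
  have mono_uv : below e u ==> below e v.
    apply/implyP => u_below; apply: contraTT (inv u_below) => v_above.
    by rewrite -(entry v u) ?inE ?eqxx ?orbT // sadj_sym.
  by apply/andP; split; last exact: IHq.
move=> v v' vq v'q le_vv'; apply/implyP.
apply: (sorted_leq_index (leT := mono)) le_vv' => //.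
- by move=> ? ? ? /implyP ? /implyP ?; apply/implyP; auto.
- by move=> ?; apply/implyP.
Qed.

Lemma interlaced_not_tremaux e f g : e \in S -> g \in S ->
  Larc w e f -> Larc w f g -> ~ tremaux s a S b0.
Proof.
move=> Se Sg ef fg; have [i1 [j1 [i2 [l1 [j2 [l2
  [/andP [? ?] /andP [? ?] /andP [? ?] lt_l2n [e1 e2 f1 f2 [g1 g2]]]]]]]]] :=
  Larc_chain ef fg.
have lt_e : i1 < i2 < n by apply/andP; split; lia.
have lt_g : l1 < l2 < n by apply/andP; split; lia.
have below_e := below_visit Se lt_e e1 e2.
have below_g := below_visit Sg lt_g g1 g2.
have e_j1 : below e (vtx s (visit j1)) by rewrite below_e //; lia.
have e_j2 : ~~ below e (vtx s (visit j2)) by rewrite below_e //; lia.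
have g_j1 : ~~ below g (vtx s (visit j1)) by rewrite below_g //; lia.
have g_j2 : below g (vtx s (visit j2)) by rewrite below_g //; lia.
have flip : visit j2 = a (visit j1).
  by apply: letter_eq; rewrite ?f1 ?f2 //; lia.
move=> /(_ (visit j1)) [p [p_path p_uniq in1 in2]]; rewrite -flip in in2.
have mono_e := below_path_monotone Se p_path p_uniq (below_root e) in1 in2.
have mono_g := below_path_monotone Sg p_path p_uniq (below_root g) in2 in1.
case: leqP mono_e mono_g => [_ /(_ isT e_j1) | /ltnW le21 _ /(_ le21 g_j2)].
  by rewrite (negbTE e_j2).
by rewrite (negbTE g_j1).
Qed.

Lemma tree_path z : exists q,
  [/\ path (sadj s a S) v0 q, uniq (v0 :: q) & last v0 q = vtx s z].
Proof.
have [p p_path ->] := connectP (S_connected b0 z).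
by case: (shortenP p_path) => q q_path q_uniq _; exists q.
Qed.

Lemma path_avoid d u p : path (sadj s a S) u p -> vtx s (a d) \notin u :: p ->
  path (sadj s a (S :\ edge a d)) u p.
Proof.
elim: p u => [//|v p IHp] u /= /andP [uv vp].
rewrite !inE !negb_or => /and3P [ne_u ne_v ne_p].
rewrite IHp ?inE ?negb_or ?ne_v // andbT.
case/existsP: uv => d' /and3P [Sd' /eqP d'u /eqP d'v].
apply/existsP; exists d'; rewrite !inE Sd' d'u d'v !eqxx !andbT.
apply/negP => /eqP /edge_darts [d'd | d'ad].
  by move: ne_v; rewrite -d'v d'd eqxx.
by move: ne_u; rewrite -d'u d'ad eqxx.
Qed.

Lemma parent_edge z q q' :
  path (sadj s a S) v0 q -> uniq (v0 :: q) -> last v0 q = vtx s z ->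
  vtx s (a z) \notin v0 :: q ->
  path (sadj s a S) v0 q' -> last v0 q' = vtx s (a z) ->
  vtx s z \notin v0 :: q' ->
  exists d, [/\ edge a d \in S, edge a d != edge a z,
    below (edge a d) (vtx s z) & ~~ below (edge a d) (vtx s (a z))].
Proof.
move=> + + + + q'_path q'_last z_q'.
case/lastP: q => [|q v].
  by move=> _ _ /= z0; rewrite -z0 mem_head in z_q'.
rewrite rcons_path last_rcons -rcons_cons rcons_uniq mem_rcons inE negb_or.
case/andP => q_path /existsP [d /and3P [Sd /eqP dq /eqP adv]] /andP [v_q _] vz.
case/andP => _ az_q; rewrite {}vz in adv v_q.
have conn_d : connect (sadj s a (S :\ edge a d)) v0 (vtx s d).
  apply/connectP; exists q; last by rewrite dq.
  by apply: path_avoid; rewrite ?adv.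
exists d; split => //.
- apply/negP => /eqP /edge_darts [dz | daz].
    by move: v_q; rewrite -dz dq mem_last.
  by move: az_q; rewrite -daz dq mem_last.
- by have := below_tree_dart Sd; rewrite /below conn_d adv.
- rewrite /below negbK; apply/connectP; exists q' => //.
  by apply: path_avoid; rewrite ?adv.
Qed.

Lemma separating_edge_Larc d y : edge a d \in S -> edge a d != edge a y ->
  below (edge a d) (vtx s y) -> ~~ below (edge a d) (vtx s (a y)) ->
  if vpos y < vpos (a y) then Larc w (edge a d) (edge a y)
  else Larc w (edge a y) (edge a d).
Proof.
move=> Sd ne_dy y_below ay_above.
have [i1 [i2 [lt_i e1 e2 below_i]]] := tree_edge_interval Sd.
rewrite -[y]visitK below_i ?vpos_lt // in y_below.
rewrite -[a y]visitK below_i ?vpos_lt // in ay_above.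
have not_y k : letter k = edge a d -> k != vpos y /\ k != vpos (a y).
  move=> ek; split; apply/eqP => eq_k; move: ne_dy;
    by rewrite -ek eq_k letter_vpos ?edge_flip eqxx.
have [? ?] := not_y _ e1; have [? ?] := not_y _ e2.
have := vpos_lt y; have := vpos_lt (a y).
case: ifP => lt_y ? ?; apply/LarcP.
  exists i1, (vpos y), i2, (vpos (a y)).
  by rewrite !letter_vpos edge_flip; split; [lia | lia | split].
exists (vpos (a y)), i1, (vpos y), i2.
by rewrite !letter_vpos edge_flip; split; [lia | lia | split].
Qed.

Lemma tremaux_dart c : ~ (exists f,
    (exists2 e, e \in S & Larc w e f) /\ (exists2 g, g \in S & Larc w f g)) ->
  exists p, [/\ path (sadj s a S) v0 p, uniq (v0 :: p),
                vtx s c \in v0 :: p & vtx s (a c) \in v0 :: p].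
Proof.
move=> no_pattern.
have [q [q_path q_uniq q_last]] := tree_path c.
have [q' [q'_path q'_uniq q'_last]] := tree_path (a c).
have [ac_q | ac_q] := boolP (vtx s (a c) \in v0 :: q).
  by exists q; rewrite -q_last mem_last.
have [c_q' | c_q'] := boolP (vtx s c \in v0 :: q').
  by exists q'; rewrite -q'_last mem_last.
have ne_c : vpos c != vpos (a c).
  apply: contraNneq ac_q => eq_pos.
  by rewrite -[a c]visitK -eq_pos visitK -q_last mem_last.
have [d1 [Sd1 ne1 below1 above1]] :=
  parent_edge q_path q_uniq q_last ac_q q'_path q'_last c_q'.
rewrite -[c]aK in q_last c_q'.
have [d2 [Sd2 ne2 below2 above2]] :=
  parent_edge q'_path q'_uniq q'_last c_q' q_path q_last ac_q.
have L1 := separating_edge_Larc Sd1 ne1 below1 above1.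
have L2 := separating_edge_Larc Sd2 ne2 below2 above2.
rewrite aK edge_flip in L2.
case: no_pattern; exists (edge a c).
case: ltngtP ne_c L1 L2 => [_ _ L1 L2 | _ _ L1 L2 | //].
  by split; [exists (edge a d1) | exists (edge a d2)].
by split; [exists (edge a d2) | exists (edge a d1)].
Qed.

Lemma tremauxP : tremaux s a S b0 <-> ~ (exists f,
    (exists2 e, e \in S & Larc w e f) /\ (exists2 g, g \in S & Larc w f g)).
Proof.
split=> [tremaux_S [f [[e Se ef] [g Sg fg]]] | no_pattern b].
  exact: interlaced_not_tremaux Se Sg ef fg tremaux_S.
exact: tremaux_dart.
Qed.

End TreeTour.

Theorem lemma14 (B : finType) (s a : {perm B}) (b0 : B) (S : {set {set B}}) :
  is_map s a -> spanning_tree s a S ->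
  (tremaux s a S b0 <->
     ~ (exists f : {set B},
          (exists2 e, e \in S & Larc (dow s a S b0) e f) /\
          (exists2 g, g \in S & Larc (dow s a S b0) f g)))
  /\
  (tremaux s a S b0 <->
     ~ (exists e1 e2 f : {set B},
          [/\ e1 \in S, e2 \in S &
              subseq [:: e1; f; e1; e2; f; e2] (dow s a S b0)])).
Proof.
case=> _ aK _ [S_edges S_connected S_acyclic].
have tremauxE := tremauxP b0 aK S_edges S_connected S_acyclic.
split=> //; rewrite tremauxE.
split=> [no_arcs [e1 [e2 [f [Se1 Se2 /pattern6_Larc [e1f fe2]]]]] | no_pattern].
  by apply: no_arcs; exists f; split; [exists e1 | exists e2].
move=> [f [[e Se ef] [g Sg fg]]]; apply: no_pattern; exists e, g, f; split=> //.
exact: (interlaced_pattern6 aK S_edges S_connected S_acyclic Se Sg ef fg).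
Qed.
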